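(* Let $A\in\mathbb{R}^{m\times m}$ be positive definite, $B\in\mathbb{R}^{m\times n}$ ($n\le m$), $\alpha\ge0$, $\beta>0$, and let $(\lambda,(u^*,v^* )^* )$ be an eigenpair of $\mathcal{P}_{MGSSP}^{-1}\mathcal{A}$ with $u\in\mathbb{C}^m$, $v\in\mathbb{C}^n$. (i) If $B$ has full column rank and $B^Tu=0$, then $$\frac{\lambda_{\min}(H)(\alpha+2\lambda_{\min}(H))}{(\alpha+2\rho(H))^2+4\rho(S)^2}\le \operatorname{Re}(\lambda)\le\frac{\rho(H)(\alpha+2\rho(H))+2\rho(S)^2}{(\alpha+2\lambda_{\min}(H))^2},\qquad |\operatorname{Im}(\lambda)|\le\frac{\alpha\rho(S)}{(\alpha+2\lambda_{\min}(H))^2}.\quad(\ast)$$ (ii) If $B$ is rank deficient and $u=0$, then $\lambda=0$. (iii) If $B$ is rank deficient and $B^Tu=0$, then either $\lambda=0$ or $\lambda$ satisfies the inequalities $(\ast)$.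
   Context: A real square matrix $A$ is called positive definite if $x^TAx>0$ for all nonzero $x\in\mathbb{R}^m$ ($A$ need not be symmetric). $H=\frac12(A+A^T)$, $S=\frac12(A-A^T)$. $\mathcal{A}=\begin{pmatrix}A & B\\ -B^T & 0\end{pmatrix}$ and, for $\alpha\ge0,\beta>0$, $\mathcal{P}_{MGSSP}=\begin{pmatrix}\alpha I+2A & 2B\\ -2B^T & \beta I\end{pmatrix}$. $\lambda_{\min}(\cdot)$ is the smallest eigenvalue of a symmetric matrix and $\rho(\cdot)$ the spectral radius. *)

(* Real matrices are modelled as matrices over a numeric
   closed field C (e.g. algC, the complex algebraic numbers) whose entries
   are all real; eigenvectors/eigenvalues live in C. *)
From HB Require Import structures.
From mathcomp Require Import all_boot all_order all_algebra.
Set Implicit Arguments. Unset Strict Implicit. Unset Printing Implicit Defensive.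
Import Order.TTheory GRing.Theory Num.Theory.
Local Open Scope ring_scope.

Section Spectral.
Variable C : numClosedFieldType.

Definition eigs (k : nat) (M : 'M[C]_k) : seq C :=
  sval (closed_field_poly_normal (char_poly M)).

Definition spectral_radius (k : nat) (M : 'M[C]_k) : C :=
  \big[Num.max/0]_(z <- eigs M) `|z|.

(* smallest eigenvalue of a symmetric real matrix (whose spectrum is real) *)
Definition lambda_min (k : nat) (M : 'M[C]_k) : C :=
  \big[Num.min/head 0 (eigs M)]_(z <- eigs M) z.

Definition real_mx (p q : nat) (M : 'M[C]_(p, q)) : Prop :=
  forall i j, M i j \is Num.real.

(* positive definite (not necessarily symmetric): x^T A x > 0 for all
   nonzero real x *)
Definition pos_def (k : nat) (A : 'M[C]_k) : Prop :=
  forall x : 'cV[C]_k, real_mx x -> x != 0 -> 0 < (x^T *m A *m x) 0 0.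

Definition symm_part (k : nat) (A : 'M[C]_k) : 'M[C]_k := 2^-1 *: (A + A^T).
Definition skew_part (k : nat) (A : 'M[C]_k) : 'M[C]_k := 2^-1 *: (A - A^T).

Definition saddle_mx (m n : nat) (A : 'M[C]_m) (B : 'M[C]_(m, n)) : 'M[C]_(m + n) :=
  block_mx A B (- B^T) 0.

Definition P_MGSSP (m n : nat) (alpha beta : C) (A : 'M[C]_m) (B : 'M[C]_(m, n))
  : 'M[C]_(m + n) :=
  block_mx (alpha%:M + 2 *: A) (2 *: B) (- (2 *: B^T)) (beta%:M).

End Spectral.

(* Write the eigenvector as w = (u, v).  When B^T u = 0 the second block row
   of [saddle_mx A B *m w = lambda *: (P *m w)] reduces to lambda beta v = 0,
   so either lambda = 0, or v = 0 and A u = lambda (alpha I + 2 A) u.  In the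
   latter case the Rayleigh quotient h + i s := u^* A u / u^* u satisfies
   lambda (alpha + 2 (h + i s)) = h + i s, whence
   Re lambda = (h (alpha + 2 h) + 2 s^2) / D and Im lambda = alpha s / D with
   D = (alpha + 2 h)^2 + 4 s^2.  As h = u^* H u / u^* u and
   i s = u^* S u / u^* u, the spectral theorem for the Hermitian H and the normal
   S gives lambda_min(H) <= h <= rho(H) and |s| <= rho(S), and the bounds follow
   by monotonicity.  When B has full column rank, lambda = 0 is impossible since
   the saddle point matrix is nonsingular: Re (u^* A u) > 0 for u <> 0. *)

From HB Require Import structures.
From mathcomp Require Import all_boot all_order all_algebra.
From mathcomp Require Import ring.
Import Order.TTheory GRing.Theory Num.Theory.
Set Implicit Arguments. Unset Strict Implicit. Unset Printing Implicit Defensive.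
Local Open Scope ring_scope.
Local Open Scope sesquilinear_scope.

Lemma unitmx_of_ker (F : fieldType) k (M : 'M[F]_k) :
  (forall v : 'cV[F]_k, M *m v = 0 -> v = 0) -> M \in unitmx.
Proof.
move=> kerM; rewrite -unitmx_tr -row_free_unit -kermx_eq0.
apply/rowV0P => v /sub_kermxP vM0; apply: trmx_inj.
by rewrite trmx0; apply: kerM; rewrite -(trmxK M) -trmx_mul vM0 trmx0.
Qed.

Lemma ler_pdiv2 (R : numFieldType) (p q d1 d2 : R) :
  0 <= p -> p <= q -> 0 < d1 -> d1 <= d2 -> p / d2 <= q / d1.
Proof.
move=> p_ge0 le_pq d1_gt0 le_d12; have d2_gt0 := lt_le_trans d1_gt0 le_d12.
apply: ler_pM => //; first by rewrite invr_ge0 ltW.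
by rewrite lef_pV2 ?posrE.
Qed.

Section RealBigops.
Variables (R : numDomainType) (I : eqType) (x0 : R) (f : I -> R).

Lemma real_le_bigmax (s : seq I) : x0 \is Num.real ->
  (forall i, f i \is Num.real) -> {in s, forall i, f i <= \big[Num.max/x0]_(j <- s) f j}.
Proof.
move=> rx0 rf; elim: s => // a s IH i; rewrite big_cons.
rewrite comparable_le_max ?real_comparable ?bigmax_real //.
by rewrite inE => /orP[/eqP->|/IH->]; rewrite ?lexx ?orbT.
Qed.

Lemma real_bigmin_le (s : seq I) : x0 \is Num.real ->
  {in s, forall i, f i \is Num.real} -> {in s, forall i, \big[Num.min/x0]_(j <- s) f j <= f i}.
Proof.
move=> rx0; elim: s => // a s IH rf i; rewrite big_cons.
have rfs : {in s, forall j, f j \is Num.real} by move=> j js; rewrite rf // inE js orbT.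
have rmin : \big[Num.min/x0]_(j <- s) f j \is Num.real by rewrite big_seq bigmin_real.
rewrite comparable_ge_min ?real_comparable ?rf ?mem_head //.
by rewrite inE => /orP[/eqP->|/IH->]; rewrite ?lexx ?orbT.
Qed.

Lemma bigmin_gt0 (s : seq I) : 0 < x0 -> {in s, forall i, 0 < f i} ->
  0 < \big[Num.min/x0]_(j <- s) f j.
Proof.
move=> x0_gt0 fs_gt0; rewrite big_seq.
apply: (big_ind (fun x => 0 < x)) => // x y x_gt0 y_gt0.
by rewrite /Num.min /Order.min; case: ifP.
Qed.

End RealBigops.

Section ImaginaryUnit.
Variables (R : comNzRingType) (I : R).
Hypothesis sqrI : I ^+ 2 = -1.

Lemma mul_rect (a b c d : R) :
  (a + I * b) * (c + I * d) = (a * c - b * d) + I * (a * d + b * c).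
Proof.
have -> : (a + I * b) * (c + I * d) =
  (a * c - b * d) + I * (a * d + b * c) + (I ^+ 2 + 1) * (b * d) by ring.
by rewrite sqrI addNr mul0r addr0.
Qed.

Lemma mul_conj_rect (a b c d e : R) :
  (a - I * b) * e * (c + I * d) = (a * e * c + b * e * d) + I * (a * e * d - b * e * c).
Proof.
have -> : (a - I * b) * e = a * e + I * (- (b * e)) by ring.
by rewrite mul_rect; congr (_ + I * _); ring.
Qed.

End ImaginaryUnit.

Section QuadraticForm.
Variable C : numClosedFieldType.
Implicit Types (k : nat).

Definition qform k (M : 'M[C]_k) (u : 'cV[C]_k) : C := (u ^t* *m M *m u) 0 0.

Lemma trmx_mulmxE k (M : 'M[C]_k) (x y : 'cV[C]_k) :
  (x^T *m M *m y) 0 0 = \sum_i \sum_j x i 0 * M i j * y j 0.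
Proof.
rewrite mxE exchange_big; apply: eq_bigr => j _.
by rewrite mxE mulr_suml; apply: eq_bigr => i _; rewrite !mxE.
Qed.

Lemma qformE k (M : 'M[C]_k) u :
  qform M u = \sum_i \sum_j (u i 0)^* * M i j * u j 0.
Proof. by rewrite /qform -map_trmx trmx_mulmxE; under eq_bigr do under eq_bigr do rewrite mxE. Qed.

Lemma qform1 k (u : 'cV[C]_k) : qform 1%:M u = \sum_i `|u i 0| ^+ 2.
Proof.
rewrite qformE; apply: eq_bigr => i _; rewrite (bigD1 i) //= big1 => [|j /negbTE nji].
  by rewrite !mxE eqxx mulr1 addr0 normCK mulrC.
by rewrite !mxE eq_sym nji mulr0 mul0r.
Qed.

Lemma qform1_ge0 k (u : 'cV[C]_k) : 0 <= qform 1%:M u.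
Proof. by rewrite qform1 sumr_ge0 // => i _; rewrite exprn_ge0. Qed.

Lemma qform1_gt0 k (u : 'cV[C]_k) : u != 0 -> 0 < qform 1%:M u.
Proof.
move=> nz_u; rewrite lt_def qform1_ge0 andbT qform1; apply: contraNneq nz_u.
move=> sum0; apply/eqP/matrixP => i j; rewrite ord1 mxE; apply/eqP.
by rewrite -normr_eq0 -sqrf_eq0 (psumr_eq0P _ sum0) // => l _; rewrite exprn_ge0.
Qed.

Lemma qformD k (M N : 'M[C]_k) u : qform (M + N) u = qform M u + qform N u.
Proof. by rewrite /qform mulmxDr mulmxDl mxE. Qed.

Lemma qformZ k (c : C) (M : 'M[C]_k) u : qform (c *: M) u = c * qform M u.
Proof. by rewrite /qform -scalemxAr -scalemxAl mxE. Qed.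

Lemma qform_unitary_conj k (P M : 'M[C]_k) u :
  qform (P ^t* *m M *m P) u = qform M (P *m u).
Proof. by rewrite /qform trmx_mul map_mxM !mulmxA. Qed.

Lemma trmxC_real m n (B : 'M[C]_(m, n)) : real_mx B -> B ^t* = B^T.
Proof. by move=> rB; rewrite realmxC //; apply/mxOverP => i j; rewrite mxE; apply: rB. Qed.

Lemma mulmx_trmxC_real p q (B : 'M[C]_(p, q)) (u : 'cV[C]_p) :
  real_mx B -> u ^t* *m B = (B^T *m u) ^t*.
Proof.
by move=> rB; rewrite trmx_mul map_mxM trmxK [B ^ _]realmxC //; apply/mxOverP => i j; apply: rB.
Qed.

Lemma qform_mulmx_tr p q (B : 'M[C]_(p, q)) (u : 'cV[C]_p) :
  real_mx B -> qform (B *m B^T) u = qform 1%:M (B^T *m u).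
Proof. by move=> rB; rewrite /qform mulmx1 !mulmxA mulmx_trmxC_real. Qed.

Lemma qform_ker k (M : 'M[C]_k) u : M *m u = 0 -> qform M u = 0.
Proof. by move=> Mu0; rewrite /qform -mulmxA Mu0 mulmx0 mxE. Qed.

Lemma qform_tr k (M : 'M[C]_k) u : real_mx M -> qform M^T u = (qform M u)^*.
Proof.
move=> rM; have -> : (qform M u)^* = ((u ^t* *m M *m u) ^t*) 0 0.
  by rewrite /qform [RHS]mxE [in RHS]mxE.
by rewrite !trmx_mul !map_mxM trmxCK (trmxC_real rM) mulmxA.
Qed.

Lemma qform_symm_part k (A : 'M[C]_k) u :
  real_mx A -> qform (symm_part A) u = 'Re (qform A u).
Proof. by move=> rA; rewrite qformZ qformD qform_tr // ReE mulrC. Qed.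

Lemma qform_skew_part k (A : 'M[C]_k) u :
  real_mx A -> qform (skew_part A) u = 'i * 'Im (qform A u).
Proof.
move=> rA; rewrite qformZ qformD -scaleN1r qformZ qform_tr // ImE !mulrA -expr2 sqrCi.
by ring.
Qed.

Lemma real_trmx_mulmx k (M : 'M[C]_k) (x y : 'cV[C]_k) :
  real_mx M -> real_mx x -> real_mx y -> (x^T *m M *m y) 0 0 \is Num.real.
Proof.
move=> rM rx ry; rewrite trmx_mulmxE.
by apply: rpred_sum => i _; apply: rpred_sum => j _; rewrite !rpredM.
Qed.

Lemma Re_qform_gt0 k (A : 'M[C]_k) u :
  real_mx A -> pos_def A -> u != 0 -> 0 < 'Re (qform A u).
Proof.
move=> rA pA nz_u.
pose x := \col_i 'Re (u i 0); pose y := \col_i 'Im (u i 0).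
have rx : real_mx x by move=> i j; rewrite mxE Creal_Re.
have ry : real_mx y by move=> i j; rewrite mxE Creal_Im.
pose r (v w : 'cV[C]_k) := (v^T *m A *m w) 0 0.
have -> : qform A u = (r x x + r y y) + 'i * (r x y - r y x).
  rewrite qformE /r !trmx_mulmxE -sumrB mulr_sumr -!big_split /=.
  apply: eq_bigr => i _; rewrite -sumrB mulr_sumr -!big_split /=.
  apply: eq_bigr => j _; rewrite [u i 0]Crect [u j 0]Crect !mxE.
  rewrite conjC_rect ?Creal_Re ?Creal_Im //.
  exact: (mul_conj_rect (sqrCi C)).
have r_real v w : real_mx v -> real_mx w -> r v w \is Num.real by apply: real_trmx_mulmx.
have r_ge0 v : real_mx v -> 0 <= r v v.
  by have [->|/pA/ltW//] := eqVneq v 0; rewrite /r mulmx0 mxE.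
rewrite Re_rect ?(rpredD, rpredN, r_real) //.
have [x0|nz_x] := eqVneq x 0; last by rewrite ltr_pwDl ?r_ge0 ?pA.
have nz_y : y != 0.
  apply: contraNneq nz_u => y0; apply/eqP/matrixP => i j; rewrite ord1 mxE [u i 0]Crect.
  move/matrixP/(_ i 0): x0; move/matrixP/(_ i 0): y0; rewrite !mxE => -> ->.
  by rewrite mulr0 addr0.
by rewrite x0 {1}/r mulmx0 mxE add0r pA.
Qed.

Lemma Re_qform_le0_eq0 k (A : 'M[C]_k) u :
  real_mx A -> pos_def A -> 'Re (qform A u) <= 0 -> u = 0.
Proof.
by move=> rA pA; apply: contraTeq => nz_u; rewrite lt_geF // Re_qform_gt0.
Qed.

End QuadraticForm.

Section NormalSpectrum.
Variable C : numClosedFieldType.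
Implicit Types (k : nat).

Lemma mem_eigs k (M : 'M[C]_k) z : (z \in eigs M) = root (char_poly M) z.
Proof.
rewrite /eigs; case: closed_field_poly_normal => r /= ->.
by rewrite (monicP (char_poly_monic M)) scale1r root_prod_XsubC.
Qed.

Lemma eigenvalue_similar k (P N : 'M[C]_k) z : P \in unitmx ->
  eigenvalue (invmx P *m N *m P) z = eigenvalue N z.
Proof.
move=> uP; apply/eigenvalueP/eigenvalueP => [[v Mv nz_v]|[v Nv nz_v]].
  exists (v *m invmx P); last by rewrite mulmx_free_eq0 ?row_free_unit ?unitmx_inv.
  by move: (congr1 (mulmx^~ (invmx P)) Mv); rewrite /= -scalemxAl !mulmxA mulmxK.
exists (v *m P); last by rewrite mulmx_free_eq0 ?row_free_unit.
by rewrite !mulmxA mulmxK // Nv scalemxAl.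
Qed.

Lemma root_char_poly_diag k (D : 'rV[C]_k) z :
  root (char_poly (diag_mx D)) z = [exists i, z == D 0 i].
Proof.
rewrite char_poly_trig ?diag_mx_is_trig //.
under eq_bigr => i _ do rewrite mxE eqxx mulr1n.
rewrite -(big_map (fun i => D 0 i) xpredT (fun a => 'X - a%:P)) root_prod_XsubC.
apply/mapP/existsP => [[i _ ->]|[i /eqP ->]]; first by exists i.
by exists i; rewrite ?mem_index_enum.
Qed.

Lemma mem_eigs_normal k (M : 'M[C]_k) z : M \is normalmx ->
  (z \in eigs M) = [exists i, z == spectral_diag M 0 i].
Proof.
move=> /orthomx_spectralP M_diag.
rewrite mem_eigs -eigenvalue_root_char {1}M_diag eigenvalue_similar ?spectral_unit //.
by rewrite eigenvalue_root_char root_char_poly_diag.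
Qed.

Lemma qform_diag k (D : 'rV[C]_k) u :
  qform (diag_mx D) u = \sum_i D 0 i * `|u i 0| ^+ 2.
Proof.
rewrite qformE; apply: eq_bigr => i _; rewrite (bigD1 i) //= big1 => [|j /negbTE nji].
  by rewrite !mxE eqxx mulr1n addr0 normCK; ring.
by rewrite !mxE eq_sym nji mulr0n mulr0 mul0r.
Qed.

Lemma qform1_unitary k (P : 'M[C]_k) u :
  P \is unitarymx -> qform 1%:M (P *m u) = qform 1%:M u.
Proof.
by move=> uP; rewrite -qform_unitary_conj mulmx1 -[P ^t* *m P]mul1mx mulmxA mulmxKtV.
Qed.

Lemma qform_normal k (M : 'M[C]_k) u : M \is normalmx ->
  qform M u = \sum_i spectral_diag M 0 i * `|(spectralmx M *m u) i 0| ^+ 2.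
Proof.
move=> /orthomx_spectralP {1}->.
by rewrite invmx_unitary ?spectral_unitarymx // qform_unitary_conj qform_diag.
Qed.

Lemma norm_qform_le_radius k (M : 'M[C]_k) u : M \is normalmx ->
  `|qform M u| <= spectral_radius M * qform 1%:M u.
Proof.
move=> nM; rewrite qform_normal // -(qform1_unitary u (spectral_unitarymx M)) qform1.
rewrite mulr_sumr; apply: le_trans (ler_norm_sum _ _ _) _; apply: ler_sum => i _.
rewrite normrM [X in _ * X]ger0_norm ?exprn_ge0 //; apply: ler_wpM2r; first exact: exprn_ge0.
apply: real_le_bigmax => //; first by move=> z; apply: normr_real.
by rewrite mem_eigs_normal //; apply/existsP; exists i.
Qed.

Lemma lambda_min_le_diag k (M : 'M[C]_k) i : M \is hermsymmx ->
  lambda_min M <= spectral_diag M 0 i.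
Proof.
move=> hM; have nM := hermitian_normalmx hM.
have real_eigs : {in eigs M, forall z, z \is Num.real}.
  move=> z; rewrite mem_eigs_normal // => /existsP[j /eqP->].
  exact: mxOverP (hermitian_spectral_diag_real hM) _ _.
apply: (real_bigmin_le (f := id)) => //; last first.
  by rewrite mem_eigs_normal //; apply/existsP; exists i.
by case E: (eigs M) => [|a s] //=; rewrite real_eigs // E mem_head.
Qed.

Lemma lambda_min_le_qform k (M : 'M[C]_k) u : M \is hermsymmx ->
  lambda_min M * qform 1%:M u <= qform M u.
Proof.
move=> hM; rewrite [qform M u]qform_normal ?hermitian_normalmx //.
rewrite -(qform1_unitary u (spectral_unitarymx M)) qform1 mulr_sumr.
by apply: ler_sum => i _; apply: ler_wpM2r; [exact: exprn_ge0 | exact: lambda_min_le_diag].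
Qed.

Lemma lambda_min_gt0 k (M : 'M[C]_k) : M \is hermsymmx -> (0 < k)%N ->
  (forall u, u != 0 -> 0 < qform M u) -> 0 < lambda_min M.
Proof.
move=> hM k_gt0 M_pos; have nM := hermitian_normalmx hM.
have diag_gt0 i : 0 < spectral_diag M 0 i.
  pose P := spectralmx M; pose u : 'cV[C]_k := P ^t* *m delta_mx i 0.
  have Pu : P *m u = delta_mx i 0.
    by rewrite mulmxA (unitarymxP (spectral_unitarymx M)) mul1mx.
  have nz_u : u != 0.
    apply: contraTneq isT => u0; move/matrixP/(_ i 0): Pu.
    by rewrite u0 mulmx0 !mxE !eqxx => /eqP; rewrite eq_sym oner_eq0.
  move: (M_pos u nz_u); rewrite qform_normal // Pu (bigD1 i) //= big1 => [|j /negbTE nji].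
    by rewrite !mxE !eqxx normr1 expr1n mulr1 addr0.
  by rewrite !mxE nji normr0 expr0n mulr0.
have eigs_gt0 : {in eigs M, forall z, 0 < z}.
  by move=> z; rewrite mem_eigs_normal // => /existsP[j /eqP->].
have : spectral_diag M 0 (Ordinal k_gt0) \in eigs M.
  by rewrite mem_eigs_normal //; apply/existsP; exists (Ordinal k_gt0).
(* The default value [head 0 (eigs M)] of the minimum is itself an eigenvalue. *)
rewrite /lambda_min; case E: (eigs M) => [|a s] // _.
by apply: (bigmin_gt0 (f := id)) => [|z zs]; apply: eigs_gt0; rewrite E ?mem_head.
Qed.

End NormalSpectrum.

Section SymmetricSkewParts.
Variables (C : numClosedFieldType) (k : nat) (A : 'M[C]_k).
Hypothesis rA : real_mx A.

Let real_half : (2^-1 : C) \is Num.real. Proof. by rewrite rpredV realn. Qed.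

Lemma symm_part_herm : symm_part A \is hermsymmx.
Proof.
apply/is_hermitianmxP; rewrite expr0 scale1r; apply/matrixP => i j.
by rewrite !mxE rmorphM rmorphD /= !conj_Creal // addrC.
Qed.

Lemma skew_part_normal : skew_part A \is normalmx.
Proof.
have skewC : (skew_part A) ^t* = - skew_part A.
  apply/matrixP => i j; rewrite !mxE rmorphM rmorphB /= !conj_Creal //.
  by rewrite -mulrN opprB.
by apply/normalmxP; rewrite skewC mulmxN mulNmx.
Qed.

Lemma qform_bounds u :
  [/\ lambda_min (symm_part A) * qform 1%:M u <= 'Re (qform A u),
      'Re (qform A u) <= spectral_radius (symm_part A) * qform 1%:M u
    & `|'Im (qform A u)| <= spectral_radius (skew_part A) * qform 1%:M u].
Proof.
have nH := hermitian_normalmx symm_part_herm.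
split; rewrite -?qform_symm_part //.
- exact: lambda_min_le_qform symm_part_herm.
- apply: le_trans (norm_qform_le_radius u nH); apply: real_ler_norm.
  by rewrite qform_symm_part // Creal_Re.
- have -> : `|'Im (qform A u)| = `|qform (skew_part A) u|.
    by rewrite qform_skew_part // normrM normCi mul1r.
  exact: norm_qform_le_radius skew_part_normal.
Qed.

Lemma lambda_min_symm_part_gt0 : pos_def A -> (0 < k)%N -> 0 < lambda_min (symm_part A).
Proof.
move=> pA k_gt0; apply: lambda_min_gt0 symm_part_herm k_gt0 _ => u nz_u.
by rewrite qform_symm_part // Re_qform_gt0.
Qed.

End SymmetricSkewParts.

Section EigenRatio.
Variable C : numClosedFieldType.

Lemma eigen_ratio_bounds (al lH rH rS h s : C) :
  s \is Num.real -> 0 <= al -> 0 < lH -> lH <= h -> h <= rH -> `|s| <= rS ->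
  let D := (al + 2 * h) ^+ 2 + 4 * s ^+ 2 in
  [/\ lH * (al + 2 * lH) / ((al + 2 * rH) ^+ 2 + 4 * rS ^+ 2)
        <= (h * (al + 2 * h) + 2 * s ^+ 2) / D,
      (h * (al + 2 * h) + 2 * s ^+ 2) / D
        <= (rH * (al + 2 * rH) + 2 * rS ^+ 2) / (al + 2 * lH) ^+ 2
    & `|al * s / D| <= al * rS / (al + 2 * lH) ^+ 2].
Proof.
move=> rs al_ge0 lH_gt0 lH_le_h h_le_rH s_le_rS D.
have h_gt0 : 0 < h := lt_le_trans lH_gt0 lH_le_h.
have cl_gt0 : 0 < al + 2 * lH by rewrite ltr_wpDl // mulr_gt0.
have c_gt0 : 0 < al + 2 * h by rewrite ltr_wpDl // mulr_gt0.
have cl_le_c : al + 2 * lH <= al + 2 * h by rewrite lerD2l ler_wpM2l.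
have c_le_cr : al + 2 * h <= al + 2 * rH by rewrite lerD2l ler_wpM2l.
have s2_ge0 : 0 <= s ^+ 2 by rewrite -real_normK // exprn_ge0.
have s2_le : s ^+ 2 <= rS ^+ 2 by rewrite -real_normK // ler_sqr ?nnegrE ?(le_trans _ s_le_rS).
have c2_le_D : (al + 2 * h) ^+ 2 <= D by rewrite lerDl mulr_ge0.
have D_gt0 : 0 < D := lt_le_trans (exprn_gt0 2 c_gt0) c2_le_D.
have cl2_le_D : (al + 2 * lH) ^+ 2 <= D.
  by apply: le_trans _ c2_le_D; rewrite ler_sqr ?nnegrE ?(ltW cl_gt0) ?(ltW c_gt0).
split.
- apply: le_trans (_ : h * (al + 2 * h) / D <= _); last first.
    by rewrite ler_pM2r ?invr_gt0 // lerDl mulr_ge0.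
  apply: ler_pdiv2 => //.
  + exact: mulr_ge0 (ltW lH_gt0) (ltW cl_gt0).
  + exact: ler_pM (ltW lH_gt0) (ltW cl_gt0) lH_le_h cl_le_c.
  + rewrite lerD ?ler_wpM2l // ler_sqr ?nnegrE ?(ltW c_gt0) //.
    exact: le_trans (ltW c_gt0) c_le_cr.
- apply: ler_pdiv2 => //; last by rewrite exprn_gt0.
  + exact: addr_ge0 (mulr_ge0 (ltW h_gt0) (ltW c_gt0)) (mulr_ge0 (ler0n _ 2) s2_ge0).
  + rewrite lerD ?ler_wpM2l //.
    exact: ler_pM (ltW h_gt0) (ltW c_gt0) h_le_rH c_le_cr.
- have Dinv_ge0 : 0 <= D^-1 by rewrite invr_ge0 ltW.
  rewrite !normrM (ger0_norm al_ge0) (ger0_norm Dinv_ge0).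
  apply: ler_pdiv2 => //; last by rewrite exprn_gt0.
  + exact: mulr_ge0 al_ge0 (normr_ge0 s).
  + by rewrite ler_wpM2l.
Qed.

Lemma eigen_ratio_solution (al h s lam : C) :
  al \is Num.real -> h \is Num.real -> s \is Num.real -> 0 < al + 2 * h ->
  lam * (al + 2 * (h + 'i * s)) = h + 'i * s ->
  let D := (al + 2 * h) ^+ 2 + 4 * s ^+ 2 in
  'Re lam = (h * (al + 2 * h) + 2 * s ^+ 2) / D /\ 'Im lam = al * s / D.
Proof.
move=> ral rh rs c_gt0 eq_lam D.
have D_gt0 : 0 < D.
  by rewrite (lt_le_trans (exprn_gt0 2 c_gt0)) // lerDl mulr_ge0 // -real_normK // exprn_ge0.
have conjwE : al + 2 * h - 'i * (2 * s) = (al + 2 * h) + 'i * (- (2 * s)) by ring.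
have lamD : lam * D = ((h * (al + 2 * h) + 2 * s ^+ 2) + 'i * (al * s)).
  have -> : lam * D = lam * (al + 2 * (h + 'i * s)) * (al + 2 * h - 'i * (2 * s)).
    rewrite -mulrA; congr (lam * _).
    have -> : al + 2 * (h + 'i * s) = (al + 2 * h) + 'i * (2 * s) by ring.
    by rewrite conjwE mul_rect ?sqrCi // /D; ring.
  by rewrite eq_lam conjwE mul_rect ?sqrCi //; congr (_ + 'i * _); ring.
have -> : lam = (h * (al + 2 * h) + 2 * s ^+ 2) / D + 'i * (al * s / D).
  by rewrite mulrA -mulrDl -lamD mulfK ?gt_eqF.
by rewrite Re_rect ?Im_rect ?(rpredD, rpredM, rpredV, rpredX, rpred1).
Qed.

End EigenRatio.

Lemma generalized_eigen_bounds (C : numClosedFieldType) k (A : 'M[C]_k) (al lam : C)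
    (u : 'cV[C]_k) :
  real_mx A -> pos_def A -> 0 <= al -> u != 0 ->
  A *m u = lam *: ((al%:M + 2 *: A) *m u) ->
  let lH := lambda_min (symm_part A) in
  let rH := spectral_radius (symm_part A) in
  let rS := spectral_radius (skew_part A) in
  [/\ lH * (al + 2 * lH) / ((al + 2 * rH) ^+ 2 + 4 * rS ^+ 2) <= 'Re lam,
      'Re lam <= (rH * (al + 2 * rH) + 2 * rS ^+ 2) / (al + 2 * lH) ^+ 2
    & `|'Im lam| <= al * rS / (al + 2 * lH) ^+ 2].
Proof.
move=> rA pA al_ge0 nz_u eig lH rH rS.
have k_gt0 : (0 < k)%N by case: k {A rA pA eig lH rH rS} u nz_u => // u; rewrite flatmx0 eqxx.
have lH_gt0 : 0 < lH := lambda_min_symm_part_gt0 rA pA k_gt0.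
have [Re_lb Re_ub Im_ub] := qform_bounds rA u.
have eq_a : qform A u = lam * qform (al%:M + 2 *: A) u.
  by rewrite /qform -mulmxA eig -scalemxAr mulmxA mxE.
rewrite -scalemx1 qformD !qformZ in eq_a.
set a := qform A u in Re_lb Re_ub Im_ub eq_a *.
set N := qform 1%:M u in Re_lb Re_ub Im_ub eq_a *.
have N_gt0 : 0 < N := qform1_gt0 nz_u.
have rN : N \is Num.real := gtr0_real N_gt0.
pose h := 'Re a / N; pose s := 'Im a / N.
have lH_le_h : lH <= h by rewrite /h ler_pdivlMr.
have h_le_rH : h <= rH by rewrite /h ler_pdivrMr.
have s_le_rS : `|s| <= rS.
  by rewrite /s normrM [`|N^-1|]gtr0_norm ?invr_gt0 // ler_pdivrMr.
have rh : h \is Num.real by rewrite rpredM ?rpredV ?Creal_Re.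
have rs : s \is Num.real by rewrite rpredM ?rpredV ?Creal_Im.
have c_gt0 : 0 < al + 2 * h.
  by rewrite ltr_wpDl // mulr_gt0 // (lt_le_trans lH_gt0).
have eq_lam : lam * (al + 2 * (h + 'i * s)) = h + 'i * s.
  have -> : h + 'i * s = a / N by rewrite [a in RHS]Crect mulrDl mulrA.
  by rewrite [in RHS]eq_a; field; rewrite gt_eqF.
have [-> ->] := eigen_ratio_solution (ger0_real al_ge0) rh rs c_gt0 eq_lam.
exact: eigen_ratio_bounds.
Qed.

Section SaddlePoint.
Variables (C : numClosedFieldType) (m n : nat) (A : 'M[C]_m) (B : 'M[C]_(m, n)).
Hypotheses (rA : real_mx A) (rB : real_mx B) (pA : pos_def A).

Lemma P_MGSSP_unit (al be : C) : 0 <= al -> 0 < be -> P_MGSSP al be A B \in unitmx.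
Proof.
move=> al_ge0 be_gt0; apply: unitmx_of_ker => w.
rewrite -[w]vsubmxK /P_MGSSP mul_block_col -(col_mx0 _ m n 1) => /eq_col_mx [E1 E2].
set u := usubmx w in E1 E2 *; set v := dsubmx w in E1 E2 *.
have vE : v = (2 / be) *: (B^T *m u).
  move/eqP: E2; rewrite addrC addr_eq0 mul_scalar_mx mulNmx opprK => /eqP E2.
  by rewrite -[v](scalerK (lt0r_neq0 be_gt0)) E2 -scalemxAl scalerA mulrC.
(* Eliminating [v] leaves a matrix with positive definite Hermitian part. *)
have Mu0 : ((al%:M + 2 *: A) + (2 * (2 / be)) *: (B *m B^T)) *m u = 0.
  by rewrite mulmxDl -E1 vE -!scalemxAl -scalemxAr scalerA mulmxA.
have u0 : u = 0.
  apply: Re_qform_le0_eq0 => //; move: (qform_ker Mu0).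
  rewrite -scalemx1 !qformD !qformZ qform_mulmx_tr //.
  set N := qform 1%:M u; set q := qform 1%:M _; set c := 2 * (2 / be) => eq0.
  have c_ge0 : 0 <= c by rewrite !mulr_ge0 ?ler0n ?invr_ge0 ?(ltW be_gt0).
  have X_ge0 : 0 <= al * N + c * q.
    exact: addr_ge0 (mulr_ge0 al_ge0 (qform1_ge0 _)) (mulr_ge0 c_ge0 (qform1_ge0 _)).
  have -> : qform A u = (al * N + 2 * qform A u + c * q - (al * N + c * q)) / 2 by field.
  rewrite eq0 sub0r; have /Creal_ReP -> : - (al * N + c * q) / 2 \is Num.real.
    by rewrite rpredM ?rpredN ?rpredV ?ger0_real.
  by rewrite mulNr oppr_le0 divr_ge0.
by rewrite u0 vE u0 mulmx0 scaler0.
Qed.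

Lemma saddle_mx_ker (w : 'cV[C]_(m + n)) :
  \rank B = n -> saddle_mx A B *m w = 0 -> w = 0.
Proof.
move=> rkB; rewrite -[w]vsubmxK /saddle_mx mul_block_col -(col_mx0 _ m n 1).
move=> /eq_col_mx [E1 E2]; set u := usubmx w in E1 E2 *; set v := dsubmx w in E1 E2 *.
have Btu0 : B^T *m u = 0 by apply: oppr_inj; rewrite -mulNmx oppr0 -E2 mul0mx addr0.
have u0 : u = 0.
  apply: Re_qform_le0_eq0 => //; move: (congr1 (fun X => (u ^t* *m X) 0 0) E1).
  rewrite /= mulmxDr !mulmxA [u ^t* *m B]mulmx_trmxC_real // Btu0.
  by rewrite trmx0 map_mx0 mul0mx mulmx0 addr0 /qform => ->; rewrite mxE raddf0.
have Bv0 : B *m v = 0 by rewrite -E1 u0 mulmx0 add0r.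
have free_Bt : row_free B^T by rewrite /row_free mxrank_tr rkB.
have v0 : v = 0.
  apply: trmx_inj; apply/eqP.
  by rewrite trmx0 -(mulmx_free_eq0 _ free_Bt) -trmx_mul Bv0 trmx0.
by rewrite u0 v0.
Qed.

Lemma MGSSP_eigen_Btu0 (al be lam : C) (u : 'cV[C]_m) (v : 'cV[C]_n) :
  0 <= al -> 0 < be ->
  invmx (P_MGSSP al be A B) *m saddle_mx A B *m col_mx u v = lam *: col_mx u v ->
  B^T *m u = 0 -> lam = 0 \/ v = 0 /\ A *m u = lam *: ((al%:M + 2 *: A) *m u).
Proof.
move=> al_ge0 be_gt0 eig Btu0; move: (congr1 (mulmx (P_MGSSP al be A B)) eig).
rewrite -!mulmxA mulKVmx ?P_MGSSP_unit // -scalemxAr /saddle_mx /P_MGSSP.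
rewrite !mul_block_col scale_col_mx => /eq_col_mx [E1].
rewrite !mulNmx -scalemxAl Btu0 scaler0 oppr0 mul0mx addr0 add0r mul_scalar_mx scalerA.
move/esym/eqP; rewrite scalemx_eq0 mulf_eq0 (gt_eqF be_gt0) orbF => /orP[/eqP|/eqP v0].
  by left.
by right; split=> //; move: E1; rewrite v0 !mulmx0 !addr0.
Qed.

End SaddlePoint.

Theorem theorem5p1 (C : numClosedFieldType) (m n : nat)
  (A : 'M[C]_m) (B : 'M[C]_(m, n)) (alpha beta : C)
  (lambda : C) (w : 'cV[C]_(m + n)) :
  real_mx A -> real_mx B -> pos_def A -> (n <= m)%N ->
  0 <= alpha -> 0 < beta ->
  w != 0 ->
  invmx (P_MGSSP alpha beta A B) *m saddle_mx A B *m w = lambda *: w ->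
  let u := usubmx w in
  let lH := lambda_min (symm_part A) in
  let rH := spectral_radius (symm_part A) in
  let rS := spectral_radius (skew_part A) in
  let bounds :=
    [/\ lH * (alpha + 2 * lH) / ((alpha + 2 * rH) ^+ 2 + 4 * rS ^+ 2) <= 'Re lambda,
        'Re lambda <= (rH * (alpha + 2 * rH) + 2 * rS ^+ 2) / (alpha + 2 * lH) ^+ 2
      & `|'Im lambda| <= alpha * rS / (alpha + 2 * lH) ^+ 2] in
  [/\ (\rank B = n -> B^T *m u = 0 -> bounds),
      ((\rank B < n)%N -> u = 0 -> lambda = 0)
    & ((\rank B < n)%N -> B^T *m u = 0 -> lambda = 0 \/ bounds)].
Proof.
move=> rA rB pA _ al_ge0 be_gt0 nz_w eig u lH rH rS bounds.
have wE : w = col_mx u (dsubmx w) by rewrite vsubmxK.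
set v := dsubmx w in wE.
rewrite {}wE in eig nz_w.
have split_eig := MGSSP_eigen_Btu0 rA rB pA al_ge0 be_gt0 eig.
have bounds_of : v = 0 -> A *m u = lambda *: ((alpha%:M + 2 *: A) *m u) -> bounds.
  move=> v0; apply: generalized_eigen_bounds => //.
  by apply: contraNneq nz_w => u0; rewrite u0 v0 col_mx0.
split.
- move=> rkB Btu0; case: (split_eig Btu0) => [lam0|[]]; last exact: bounds_of.
  move: eig; rewrite lam0 scale0r.
  move/(congr1 (mulmx (P_MGSSP alpha beta A B))); rewrite -!mulmxA mulKVmx ?P_MGSSP_unit //.
  by rewrite mulmx0 => /(saddle_mx_ker rA rB pA rkB) w0; rewrite w0 eqxx in nz_w.
- move=> _ u0; case: split_eig => [|//|[v0 _]]; first by rewrite u0 mulmx0.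
  by rewrite u0 v0 col_mx0 eqxx in nz_w.
- move=> _ Btu0; case: (split_eig Btu0) => [lam0|[v0 Au]]; [by left | right].
  exact: bounds_of.
Qed.
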